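(* Let $G=(V,E)$ be a finite simple undirected graph with $k$ vertices and let $n\ge k$ be an integer. Then $Y(n,G)\le D(n,k)$, with equality only if $G$ is the complete graph $K_k$.
   Context: A walk of length $n-1$ in a graph is a sequence of $n$ vertices $v_1,\dots,v_n$ such that $\{v_i,v_{i+1}\}$ is an edge for each $i$. $Y(n,G)$ denotes the number of walks of length $n-1$ in $G$ that visit every vertex of $G$ at least once. $D(n,k)=Y(n,K_k)$, where $K_k$ is the complete graph on $k$ (labelled) vertices. *)

From mathcomp Require Import all_boot.
Set Implicit Arguments. Unset Strict Implicit. Unset Printing Implicit Defensive.

Definition simple_graph (T : finType) (e : rel T) : Prop :=
  symmetric e /\ irreflexive e.

(* A walk of length n-1: a sequence v_0, ..., v_{n-1} of n vertices, encoded
   as a finite function 'I_n -> T, with consecutive vertices adjacent. *)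
Definition is_walk (T : finType) (e : rel T) (n : nat) (w : {ffun 'I_n -> T}) : bool :=
  [forall i : 'I_n, forall j : 'I_n, (j == i.+1 :> nat) ==> e (w i) (w j)].

Definition covers (T : finType) (n : nat) (w : {ffun 'I_n -> T}) : bool :=
  [forall v : T, exists i : 'I_n, w i == v].

Definition Y (n : nat) (T : finType) (e : rel T) : nat :=
  #|[set w : {ffun 'I_n -> T} | is_walk e w && covers w]|.

Definition complete_rel (k : nat) : rel 'I_k := fun x y => x != y.

Definition D (n k : nat) : nat := Y n (@complete_rel k).

Definition is_complete (T : finType) (e : rel T) : Prop :=
  forall x y : T, x != y -> e x y.

(* Relabelling vertices by a bijection that maps edges to edges maps covering
   walks injectively to covering walks, so [Y n] is monotone under such maps.
   Every simple graph on [T] is a spanning subgraph of the complete graph on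
   [T], whose count is [D n #|T|] after relabelling [T] by ['I_#|T|].  If the
   counts agree, every covering walk of the complete graph is a walk of [G];
   for distinct [x], [y], cycling through an enumeration of [T] that starts
   with [x, y] gives such a walk (it covers [T] because [#|T| <= n]), so its
   first step [x -> y] is an edge of [G]. *)
From mathcomp Require Import all_boot.

Set Implicit Arguments.
Unset Strict Implicit.
Unset Printing Implicit Defensive.

Definition complete_on {T : finType} : rel T := fun x y => x != y.

Section Relabelling.
Variables (n : nat) (T T' : finType) (e : rel T) (e' : rel T') (f : T -> T').

Definition relabel (w : {ffun 'I_n -> T}) : {ffun 'I_n -> T'} := [ffun i => f (w i)].

Lemma relabel_inj : injective f -> injective relabel.
Proof.
move=> f_inj u v /ffunP uv; apply/ffunP => i.
by apply: f_inj; have := uv i; rewrite !ffunE.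
Qed.

Lemma is_walk_relabel {w} :
  {homo f : x y / e x y >-> e' x y} -> is_walk e w -> is_walk e' (relabel w).
Proof.
move=> f_hom /forallP w_walk; apply/forallP => i; apply/forallP => j.
by apply/implyP => ji; rewrite !ffunE f_hom // (implyP (forallP (w_walk i) j)).
Qed.

Lemma covers_relabel {g : T' -> T} {w} : cancel g f -> covers w -> covers (relabel w).
Proof.
move=> gK /forallP w_cov; apply/forallP => v.
have /existsP [i /eqP wi] := w_cov (g v).
by apply/existsP; exists i; rewrite ffunE wi gK.
Qed.

Lemma Y_leq_hom :
  bijective f -> {homo f : x y / e x y >-> e' x y} -> Y n e <= Y n e'.
Proof.
move=> [g fK gK] f_hom; rewrite /Y -(card_imset _ (relabel_inj (can_inj fK))).
apply/subset_leq_card/subsetP => u /imsetP [w]; rewrite !inE => /andP [w_walk w_cov] ->.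
by rewrite (is_walk_relabel f_hom w_walk) (covers_relabel gK w_cov).
Qed.

End Relabelling.

Lemma Y_complete_on (n : nat) (T : finType) : Y n (@complete_on T) = D n #|T|.
Proof.
have neq_inj (A B : finType) (h : A -> B) : injective h ->
    {homo h : x y / complete_on x y >-> complete_on x y}.
  by move=> h_inj x y; apply: contra => /eqP /h_inj ->.
apply/eqP; rewrite eqn_leq.
apply/andP; split; apply: Y_leq_hom.
- by exists enum_val; [exact: enum_rankK | exact: enum_valK].
- exact/neq_inj/enum_rank_inj.
- by exists enum_rank; [exact: enum_valK | exact: enum_rankK].
- exact/neq_inj/enum_val_inj.
Qed.

Section SpanningSubgraph.
Variables (n : nat) (T : finType) (e e' : rel T).
Hypothesis sub_e : subrel e e'.

Lemma Y_leq_subrel : Y n e <= Y n e'.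
Proof. by apply: (@Y_leq_hom n _ _ e e' id) => //; exists id. Qed.

Lemma is_walk_of_Y_eq (w : {ffun 'I_n -> T}) :
  Y n e = Y n e' -> is_walk e' w -> covers w -> is_walk e w.
Proof.
move=> eqY w_walk w_cov.
set A := [set u : {ffun 'I_n -> T} | is_walk e u && covers u].
set B := [set u : {ffun 'I_n -> T} | is_walk e' u && covers u].
have sAB : A \subset B.
  apply/subsetP => u; rewrite !inE => /andP [u_walk ->].
  by have := is_walk_relabel (f := id) sub_e u_walk; rewrite /relabel andbT ffunK.
have A_eq_B : A = B by apply/eqP; rewrite eqEcard sAB -[#|A|]/(Y n e) eqY leqnn.
suff : w \in A by rewrite inE => /andP [].
by rewrite A_eq_B inE w_walk w_cov.
Qed.

End SpanningSubgraph.

Section CyclicWalk.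
Variables (T : finType) (x0 : T) (s : seq T) (n : nat).

Definition cyclic_walk : {ffun 'I_n -> T} := [ffun i : 'I_n => nth x0 s (i %% size s)].

Lemma is_walk_cyclic : uniq s -> 1 < size s -> is_walk (@complete_on T) cyclic_walk.
Proof.
move=> s_uniq s_gt1; apply/forallP => i; apply/forallP => j; apply/implyP => /eqP ji.
rewrite !ffunE /complete_on nth_uniq ?ltn_mod ?(ltnW s_gt1) // ji.
by apply: contraL s_gt1; rewrite eq_sym eqn_mod_dvd // subSnn dvdn1 => /eqP ->.
Qed.

Lemma covers_cyclic : size s <= n -> (forall z, z \in s) -> covers cyclic_walk.
Proof.
move=> s_le_n s_full; apply/forallP => z; apply/existsP.
have z_lt : index z s < size s by rewrite index_mem.
exists (Ordinal (leq_trans z_lt s_le_n)).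
by rewrite ffunE /= modn_small // nth_index.
Qed.

End CyclicWalk.

Lemma enum_starting_with (T : finType) (x y : T) : x != y ->
  {s | let t := [:: x, y & s] in [/\ uniq t, forall z, z \in t & size t = #|T|]}.
Proof.
move=> xy; exists [seq z <- enum T | z \notin [:: x; y]] => t.
have t_uniq : uniq t.
  by rewrite /= inE (negbTE xy) !mem_filter !inE !eqxx orbT /= filter_uniq ?enum_uniq.
have t_full z : z \in t by rewrite !inE mem_filter mem_enum andbT !inE orbA orbN.
split=> //; rewrite -(card_uniqP t_uniq).
by apply: eq_card => z; rewrite t_full.
Qed.

Lemma walk_first_step (T : finType) (e : rel T) (n : nat) (w : {ffun 'I_n -> T})
    (n_gt1 : 1 < n) :
  is_walk e w -> e (w (Ordinal (ltnW n_gt1))) (w (Ordinal n_gt1)).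
Proof.
by move=> /forallP/(_ (Ordinal (ltnW n_gt1)))/forallP/(_ (Ordinal n_gt1))/implyP; apply.
Qed.

Theorem mainTheorem2 (T : finType) (e : rel T) (n : nat) :
  simple_graph e -> #|T| <= n ->
  Y n e <= D n #|T| /\ (Y n e = D n #|T| -> is_complete e).
Proof.
move=> [_ e_irr] T_le_n.
have e_sub : subrel e (@complete_on T).
  by move=> x y; apply: contraTneq => ->; rewrite e_irr.
rewrite -Y_complete_on; split; first exact: Y_leq_subrel.
move=> eqY x y xy; have [s [t_uniq t_full t_size]] := enum_starting_with xy.
have n_gt1 : 1 < n by rewrite (leq_trans _ T_le_n) // -t_size.
have w_walk : is_walk e (cyclic_walk x [:: x, y & s] n).
  apply: (is_walk_of_Y_eq e_sub eqY); first exact: is_walk_cyclic.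
  by apply: covers_cyclic; rewrite ?t_size.
by have := walk_first_step n_gt1 w_walk; rewrite !ffunE.
Qed.
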